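(* Let $n\ge1$. Then there is a recurrent GNN such that for all graphs $G,G'$ of order at most $n$, if $\mathrm{CR}^{(\infty)}$ distinguishes $G$ and $G'$ then $\xi(G)\ne\xi(G')$, where $\xi$ is the graph invariant computed by the GNN in $n$ iterations.
   Context: Graphs are finite, undirected, simple, with a fixed number $\ell$ of vertex labels; $\mathrm{col}(G,v)\in\{0,1\}^\ell$ is the label indicator vector; $N^G(v)$ the neighbourhood; the order of $G$ is $|V(G)|$. Colour refinement: $\mathrm{CR}^{(0)}(G,v)=\mathrm{col}(G,v)$, $\mathrm{CR}^{(t+1)}(G,v)=\big(\mathrm{CR}^{(t)}(G,v),\{\!\{\mathrm{CR}^{(t)}(G,w):w\in N^G(v)\}\!\}\big)$ (formal colours comparable across graphs); $\mathrm{CR}^{(\infty)}(G)=\mathrm{CR}^{(t_\infty)}(G)$ with $t_\infty$ least such that steps $t_\infty$ and $t_\infty+1$ induce the same partition of $V(G)$. $\mathrm{CR}^{(\infty)}$ distinguishes $G,G'$ if $\{\!\{\mathrm{CR}^{(\infty)}(G,v):v\in V(G)\}\!\}\ne\{\!\{\mathrm{CR}^{(\infty)}(G',v'):v'\in V(G')\}\!\}$. A recurrent GNN of dimension $q\ge\ell$ consists of one layer with sum aggregation: it maps a feature map $\zeta:V(G)\to\mathbb{R}^q$ to $\eta(v)=\mathrm{comb}\big(\zeta(v),\sum_{w\in N^G(v)}\zeta(w)\big)$, where $\mathrm{comb}:\mathbb{R}^{2q}\to\mathbb{R}^q$ is computed by a feedforward neural network (layers $\vec x\mapsto\sigma(A\vec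 x+\vec b)$ with continuous activation functions $\sigma$ applied pointwise), together with an aggregate readout function mapping finite multisets of vectors in $\mathbb{R}^q$ to an output space, given by summation followed by a function computed by a feedforward neural network. On $G$, starting from $\zeta^{(0)}(v)=\mathrm{col}(G,v)$ padded with zeros, iterating the layer gives $\zeta^{(1)},\zeta^{(2)},\dots$; the graph invariant computed in $n$ iterations is $\xi(G)=\mathrm{aggro}(\{\!\{\zeta^{(n)}(v):v\in V(G)\}\!\})$. *)

From HB Require Import structures.
From mathcomp Require Import all_boot all_order all_algebra.
From mathcomp Require Import all_classical all_reals all_analysis.
From mathcomp Require Import finmap multiset.

Set Implicit Arguments.
Unset Strict Implicit.
Unset Printing Implicit Defensive.

Import Order.TTheory GRing.Theory Num.Theory.
Import numFieldNormedType.Exports.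
Local Open Scope ring_scope.

(* A finite, undirected, simple graph: symmetric irreflexive adjacency on a finite
   vertex type; lab v is the label indicator vector col(G,v) in {0,1}^l. *)
Record graph (l : nat) := Graph {
  vert : finType;
  adj : rel vert;
  adj_sym : symmetric adj;
  adj_irr : irreflexive adj;
  lab : vert -> {ffun 'I_l -> bool}
}.

Fixpoint crT (l t : nat) : choiceType :=
  match t with
  | 0 => {ffun 'I_l -> bool}
  | t'.+1 => (crT l t' * multiset (crT l t'))%type
  end.

Fixpoint CR (l : nat) (G : graph l) (t : nat) : vert G -> crT l t :=
  match t return vert G -> crT l t with
  | 0 => fun v => lab v
  | t'.+1 => fun v =>
      (CR t' v, seq_mset [seq CR t' w | w <- enum (vert G) & adj v w])
  end.

Definition cr_stable (l : nat) (G : graph l) (t : nat) : Prop :=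
  forall v w : vert G, (@CR l G t v == @CR l G t w) = (@CR l G t.+1 v == @CR l G t.+1 w).

Definition is_tinf (l : nat) (G : graph l) (t : nat) : Prop :=
  cr_stable G t /\ forall s, (s < t)%N -> ~ cr_stable G s.

(* the multiset {{ CR^(t)(G,v) : v in V(G) }}, colours tagged with their round
   so that colours of different rounds are comparable (and distinct) formal objects *)
Definition cr_mset (l : nat) (G : graph l) (t : nat) : multiset {s : nat & crT l s} :=
  seq_mset [seq (existT (fun s => crT l s) t (@CR l G t v)) | v <- enum (vert G)].

Definition CRinf_distinguishes (l : nat) (G G' : graph l) : Prop :=
  exists t t', is_tinf G t /\ is_tinf G' t' /\ cr_mset G t <> cr_mset G' t'.

Inductive fnn_fun (R : realType) : forall p r : nat, ('cV[R]_p -> 'cV[R]_r) -> Prop :=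
| FNNLayer p r (A : 'M[R]_(r, p)) (b : 'cV[R]_r) (sigma : R -> R) :
    continuous sigma -> @fnn_fun R p r (fun x => map_mx sigma (A *m x + b))
| FNNComp p r s (f : 'cV[R]_p -> 'cV[R]_r) (g : 'cV[R]_r -> 'cV[R]_s) :
    @fnn_fun R p r f -> @fnn_fun R r s g -> @fnn_fun R p s (g \o f).

Record rgnn (R : realType) (l : nat) := RGNN {
  gq : nat;
  gq_ge : (l <= gq)%N;
  gcomb : 'cV[R]_(gq + gq) -> 'cV[R]_gq;
  gcomb_fnn : fnn_fun gcomb;
  gout : nat;
  gro : 'cV[R]_gq -> 'cV[R]_gout;
  gro_fnn : fnn_fun gro
}.

Definition zeta0 (R : realType) (l q : nat) (G : graph l) (v : vert G) : 'cV[R]_q :=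
  \col_(i < q) (if (insub (nat_of_ord i) : option 'I_l) is Some j
                then ((lab v j : nat)%:R : R) else 0).

Definition zeta (R : realType) (l : nat) (N : rgnn R l) (G : graph l)
  : nat -> vert G -> 'cV[R]_(gq N) :=
  fix z (k : nat) : vert G -> 'cV[R]_(gq N) :=
  match k with
  | 0 => @zeta0 R l (gq N) G
  | k'.+1 => fun v =>
      @gcomb R l N (col_mx (z k' v) (\sum_(w : vert G | adj v w) z k' w))
  end.

Definition xi (R : realType) (l : nat) (N : rgnn R l) (k : nat) (G : graph l)
  : 'cV[R]_(gout N) :=
  @gro R l N (\sum_(v : vert G) @zeta R l N G k v).

(* The network keeps one natural number y(v) in the last coordinate
   of its state; the other coordinates carry the label bits in round 0 and are
   zero afterwards. One iteration replaces y(v) by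
     B ^ (a(v)^2 + K^2 ((y(v) + S(v))^2 + S(v))),
   where S(v) is the sum of y over the neighbours of v, a(v) < K = 2^l is the
   binary code of the label of v (in round 0, and 0 later) and B = n + 1. The
   exponent is an injective function of (a(v), y(v), S(v)), and as v has fewer
   than B neighbours, S(v) is a base-B numeral whose digits count the
   neighbours' exponents. By induction y^(k+1)(v) thus determines CR^(k)(v), and
   the readout, the sum of y^(n) over all vertices, determines the multiset of
   CR^(n-1) colours and hence those of all earlier rounds. Colour refinement on
   at most n vertices is stable before round n, so this fixes CR^(oo). *)

From HB Require Import structures.
From mathcomp Require Import all_boot all_order all_algebra.
From mathcomp Require Import all_classical all_reals all_analysis.
From mathcomp Require Import finmap multiset.
From mathcomp Require Import ring zify.

Set Implicit Arguments.
Unset Strict Implicit.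
Unset Printing Implicit Defensive.

(** * Base-B numerals and a polynomial pairing *)

Lemma numeral_lt (B M : nat) (c : 'I_M -> nat) :
  (forall j, c j < B) -> \sum_(j < M) c j * B ^ j < B ^ M.
Proof.
elim: M c => [|M IH] c cB; first by rewrite big_ord0.
rewrite big_ord_recr /= expnS.
have low := IH _ (fun j => cB (widen_ord (leqnSn M) j)).
apply: (@leq_trans ((c ord_max).+1 * B ^ M)).
  by rewrite mulSn ltn_add2r.
by rewrite leq_mul2r cB orbT.
Qed.

Lemma numeral_inj (B M : nat) (c c' : 'I_M -> nat) :
  (forall j, c j < B) -> (forall j, c' j < B) ->
  \sum_(j < M) c j * B ^ j = \sum_(j < M) c' j * B ^ j -> c =1 c'.
Proof.
elim: M c c' => [|M IH] c c' cB c'B; first by move=> _ [].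
rewrite !big_ord_recr /=.
set low := \sum_(j < M) _; set low' := \sum_(j < M) _ => E.
have lowB : low < B ^ M := numeral_lt (fun j => cB _).
have low'B : low' < B ^ M := numeral_lt (fun j => c'B _).
have BM : 0 < B ^ M by apply: leq_ltn_trans lowB.
have top : c ord_max = c' ord_max.
  have := congr1 (divn^~ (B ^ M)) E.
  by rewrite /= (addnC low) (addnC low') !divnMDl // !divn_small // !addn0.
have lowE : low = low'.
  have := congr1 (modn^~ (B ^ M)) E.
  by rewrite /= (addnC low) (addnC low') !modnMDl !modn_small.
move=> j; case: (ltnP j M) => jM.
  have -> : j = widen_ord (leqnSn M) (Ordinal jM) by apply: val_inj.
  exact: IH (fun j => cB _) (fun j => c'B _) lowE _.
by have -> : j = ord_max by apply: val_inj; apply/eqP; rewrite eqn_leq -ltnS ltn_ord.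
Qed.

Lemma sum_expn_count (B M : nat) (s : seq nat) : all (fun x => x < M) s ->
  \sum_(x <- s) B ^ x = \sum_(j < M) count_mem (j : nat) s * B ^ j.
Proof.
elim: s => [|x s IH] /=; first by rewrite big_nil big1.
case/andP=> xM sM; rewrite big_cons IH //.
under [RHS]eq_bigr do rewrite mulnDl.
rewrite big_split /=; congr (_ + _).
rewrite (bigD1 (Ordinal xM)) //= eqxx mul1n big1 ?addn0 // => j.
by rewrite -val_eqE /= eq_sym => /negbTE->.
Qed.

Lemma perm_eq_of_sum_expn (B : nat) (s s' : seq nat) :
  size s < B -> size s' < B ->
  \sum_(x <- s) B ^ x = \sum_(x <- s') B ^ x -> perm_eq s s'.
Proof.
move=> sB s'B.
set M := (\max_(x <- s ++ s') x).+1.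
have ltM x : x \in s ++ s' -> x < M by move=> xs; rewrite ltnS leq_bigmax_seq.
have sM : all (fun x => x < M) s.
  by apply/allP => x xs; apply: ltM; rewrite mem_cat xs.
have s'M : all (fun x => x < M) s'.
  by apply/allP => x xs; apply: ltM; rewrite mem_cat xs orbT.
rewrite (sum_expn_count B sM) (sum_expn_count B s'M).
move=> /numeral_inj Ecount; apply/allP => x /ltM xM.
apply/eqP; apply: (Ecount _ _ (Ordinal xM)) => j.
- exact: leq_ltn_trans (count_size _ _) sB.
- exact: leq_ltn_trans (count_size _ _) s'B.
Qed.

Lemma perm_map_transfer (T T' X Y : eqType) (f : T -> X) (f' : T' -> X)
    (g : T -> Y) (g' : T' -> Y) (s : seq T) (s' : seq T') :
  (forall a b, a \in s -> b \in s' -> f a = f' b -> g a = g' b) ->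
  perm_eq (map f s) (map f' s') -> perm_eq (map g s) (map g' s').
Proof.
elim: s s' => [|a s IH] s' fg P.
  by case: s' P {fg} => // ? ? /perm_size.
have : f a \in map f' s' by rewrite -(perm_mem P) mem_head.
case/mapP=> b bs' fab.
have remP : perm_eq (b :: rem b s') s' by rewrite perm_sym perm_to_rem.
apply: perm_trans (perm_map g' remP).
rewrite /= (fg a b (mem_head _ _) bs' fab) perm_cons.
apply: IH => [x y xs ys|].
  by apply: fg; [rewrite inE xs orbT | exact: mem_rem ys].
rewrite -(perm_cons (f a)); apply: perm_trans P _.
by rewrite fab perm_sym; apply: (perm_map f' remP).
Qed.

Lemma cantor_inj (y S y' S' : nat) :
  (y + S) ^ 2 + S = (y' + S') ^ 2 + S' -> y = y' /\ S = S'.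
Proof.
have bound u v : u < v -> u ^ 2 + u < v ^ 2.
  by move=> uv; nia.
move=> E; suff D : y + S = y' + S' by move: E; rewrite D => /addnI; lia.
case: (ltngtP (y + S) (y' + S')) => // /bound; lia.
Qed.

Definition pairing (K a y S : nat) : nat := a ^ 2 + K ^ 2 * ((y + S) ^ 2 + S).

Lemma pairing_inj (K a y S a' y' S' : nat) : a < K -> a' < K ->
  pairing K a y S = pairing K a' y' S' -> [/\ a = a', y = y' & S = S'].
Proof.
move=> aK a'K; rewrite /pairing => E.
have K2 : 0 < K ^ 2 by rewrite expn_gt0; lia.
have sq u : u < K -> u ^ 2 < K ^ 2 by move=> uK; rewrite ltn_exp2r.
have hi : (y + S) ^ 2 + S = (y' + S') ^ 2 + S'.
  have := congr1 (divn^~ (K ^ 2)) E.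
  by rewrite /= ![K ^ 2 * _]mulnC !divnDMl // !divn_small ?sq.
have [-> ->] := cantor_inj hi.
by move: E; rewrite hi => /addIn /eqP; rewrite eqn_exp2r // => /eqP.
Qed.

(** * Colour refinement *)

Section ColourClasses.
Variables (l : nat) (G : graph l).

Definition cr_class (t : nat) (v : vert G) : {set vert G} := [set w | CR t w == CR t v].

Definition cr_classes (t : nat) : {set {set vert G}} := [set cr_class t v | v in vert G].

Definition coarsen (t : nat) (C : {set vert G}) : {set vert G} :=
  [set w | [exists v in C, CR t w == CR t v]].

Lemma coarsen_cr_class t v : coarsen t (cr_class t.+1 v) = cr_class t v.
Proof.
apply/setP => w; rewrite !inE; apply/existsP/idP => [[u]|wv].
  by rewrite inE => /andP[/eqP[uv _] /eqP->]; rewrite uv.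
by exists v; rewrite inE eqxx.
Qed.

Lemma cr_classes_coarsen t : cr_classes t = coarsen t @: cr_classes t.+1.
Proof. by rewrite -imset_comp; apply: eq_imset => v; rewrite /= coarsen_cr_class. Qed.

Lemma card_cr_classes_unstable t :
  ~ cr_stable G t -> #|cr_classes t| < #|cr_classes t.+1|.
Proof.
move=> unstable; rewrite cr_classes_coarsen ltn_neqAle leq_imset_card andbT.
apply: contra_notN unstable => /imset_injP coarsen_inj v w.
apply/idP/idP => [vw|/eqP[vw _]]; last by rewrite vw.
suff Evw : cr_class t.+1 v = cr_class t.+1 w.
  have : v \in cr_class t.+1 w by rewrite -Evw inE.
  by rewrite inE.
have mem u : cr_class t.+1 u \in cr_classes t.+1 by rewrite /cr_classes imset_f.
apply: coarsen_inj; [exact: mem | exact: mem |].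
by rewrite [LHS]coarsen_cr_class [RHS]coarsen_cr_class /cr_class (eqP vw).
Qed.

Lemma tinf_le_card t : is_tinf G t -> t <= #|vert G|.-1.
Proof.
case=> _ minimal; case: (posnP #|vert G|) => [V0|V_gt0].
  case: t minimal => // t /(_ 0 isT); case; move=> v.
  by have := card0_eq V0 v; rewrite inE.
have classes_gt s : s <= t -> s < #|cr_classes s|.
  elim: s => [_|s IH st].
    by case/card_gt0P: V_gt0 => v _; apply/card_gt0P; exists (cr_class 0 v); rewrite imset_f.
  exact: leq_ltn_trans (IH (ltnW st)) (card_cr_classes_unstable (minimal s st)).
have : #|cr_classes t| <= #|vert G| by rewrite (leq_trans (leq_imset_card _ _)).
by have := classes_gt t (leqnn t); lia.
Qed.

End ColourClasses.

Definition same_cr_colours (l t : nat) (G G' : graph l) : Prop :=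
  perm_eq (map (CR t) (enum (vert G))) (map (CR t) (enum (vert G'))).

Lemma same_cr_colours_le l s t (G G' : graph l) :
  s <= t -> same_cr_colours t G G' -> same_cr_colours s G G'.
Proof.
elim: t => [|t IH]; first by rewrite leqn0 => /eqP->.
rewrite leq_eqVlt ltnS => /orP[/eqP-> //|st] same; apply: IH => //.
have forget (H : graph l) :
  map (CR t) (enum (vert H)) = map fst (map (CR t.+1) (enum (vert H))) := map_comp _ _ _.
by rewrite /same_cr_colours !forget perm_map.
Qed.

Lemma same_cr_colours_stable l t (G G' : graph l) :
  same_cr_colours t.+1 G G' -> cr_stable G t -> cr_stable G' t.
Proof.
move=> same stable v w.
have pull (u : vert G') : exists2 u0 : vert G, CR t.+1 u0 = CR t.+1 u & CR t u0 = CR t u.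
  have : CR t.+1 u \in map (CR t.+1) (enum (vert G)).
    by rewrite (perm_mem same) map_f ?mem_enum.
  case/mapP=> u0 _ e; exists u0; first exact: esym e.
  exact: (congr1 fst (esym e)).
have [v0 ev1 ev0] := pull v; have [w0 ew1 ew0] := pull w.
rewrite -ev0 -ew0 -ev1 -ew1; exact: stable.
Qed.

Lemma not_CRinf_distinguishes l m (G G' : graph l) :
  #|vert G| <= m.+1 -> #|vert G'| <= m.+1 -> same_cr_colours m G G' ->
  ~ CRinf_distinguishes G G'.
Proof.
move=> VG VG' same [t [t' [tinf [tinf' neq]]]].
have same_le s : s <= m -> same_cr_colours s G G'.
  by move=> sm; exact: same_cr_colours_le sm same.
have tm : t <= m by have := tinf_le_card tinf; lia.
have t'm : t' <= m by have := tinf_le_card tinf'; lia.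
have et : t' = t.
  case: (ltngtP t' t) => // lt; [case: (tinf.2 t' lt) | case: (tinf'.2 t lt)].
    apply: same_cr_colours_stable tinf'.1.
    by rewrite /same_cr_colours perm_sym; apply: same_le; apply: leq_trans tm.
  by apply: same_cr_colours_stable tinf.1; apply: same_le; apply: leq_trans t'm.
apply: neq; rewrite et.
have tag (H : graph l) : [seq existT _ t (CR t v) | v <- enum (vert H)] =
    map (existT (fun s => crT l s) t) (map (CR t) (enum (vert H))) := map_comp _ _ _.
rewrite /cr_mset !tag; apply/eq_seq_msetP; exact: perm_map (same_le t tm).
Qed.

(** * The integers carried by the network *)

Section IntegerShadow.
Variables (l n : nat).

Definition radix : nat := n.+1.
Definition lab_bound : nat := 2 ^ l.

Definition lab_code (G : graph l) (v : vert G) : nat := \sum_(j < l) lab v j * 2 ^ j.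

Definition lab_part (G : graph l) (k : nat) (v : vert G) : nat :=
  if k is 0 then lab_code v else 0.

Fixpoint ycode (G : graph l) (k : nat) : vert G -> nat :=
  match k with
  | 0 => fun _ => 0
  | k'.+1 => fun v => radix ^ pairing lab_bound (lab_part k' v) (ycode k' v)
                                (\sum_(w | adj v w) ycode k' w)
  end.

Definition round_code (G : graph l) (k : nat) (v : vert G) : nat :=
  pairing lab_bound (lab_part k v) (ycode k v) (\sum_(w | adj v w) ycode k w).

Lemma ycodeS (G : graph l) k (v : vert G) : ycode k.+1 v = radix ^ round_code k v.
Proof. by []. Qed.

Lemma lab_part_lt (G : graph l) k (v : vert G) : lab_part k v < lab_bound.
Proof.
case: k => [|k]; last by rewrite /lab_bound expn_gt0.
exact: (numeral_lt (B := 2) (fun j => leq_b1 (lab v j))).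
Qed.

Lemma lab_code_inj (G G' : graph l) (v : vert G) (v' : vert G') :
  lab_code v = lab_code v' -> lab v = lab v'.
Proof.
move/(numeral_inj (B := 2) (fun j => leq_b1 (lab v j)) (fun j => leq_b1 (lab v' j))).
move=> E.
by apply/ffunP => j; have := E j; case: (lab v j); case: (lab v' j).
Qed.

Lemma size_nbrs (G : graph l) (v : vert G) :
  size [seq w <- enum (vert G) | adj v w] <= #|vert G|.
Proof. by rewrite size_filter cardE count_size. Qed.

Lemma sum_nbrs (G : graph l) (v : vert G) (F : vert G -> nat) :
  \sum_(w | adj v w) F w = \sum_(w <- [seq w <- enum (vert G) | adj v w]) F w.
Proof. by rewrite big_filter big_enum_cond. Qed.

Lemma perm_CR_of_sum_ycode k (G G' : graph l) (s : seq (vert G)) (s' : seq (vert G')) :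
  (forall (v : vert G) (v' : vert G'), round_code k v = round_code k v' -> CR k v = CR k v') ->
  size s <= n -> size s' <= n ->
  \sum_(v <- s) ycode k.+1 v = \sum_(v <- s') ycode k.+1 v ->
  perm_eq (map (CR k) s) (map (CR k) s').
Proof.
move=> code_CR sn s'n E.
apply: (perm_map_transfer (f := @round_code G k) (f' := @round_code G' k)) => [v v' _ _|].
  exact: code_CR.
apply: (perm_eq_of_sum_expn (B := radix)); rewrite ?size_map ?ltnS //.
by rewrite !big_map.
Qed.

Lemma CR_eq_of_round_code (G G' : graph l) k : #|vert G| <= n -> #|vert G'| <= n ->
  forall (v : vert G) (v' : vert G'), round_code k v = round_code k v' -> CR k v = CR k v'.
Proof.
move=> VG VG'; elim: k => [|k IH] v v'.
  by case/(pairing_inj (lab_part_lt _ _) (lab_part_lt _ _)) => /lab_code_inj.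
case/(pairing_inj (lab_part_lt _ _) (lab_part_lt _ _)) => _ ycodeE nbrsE.
have radix_gt1 : 1 < radix.
  by rewrite ltnS (leq_trans _ VG) //; apply/card_gt0P; exists v.
rewrite /=; congr (_, _).
  by apply: IH; apply/eqP; rewrite -(eqn_exp2l _ _ radix_gt1) -!ycodeS ycodeE.
apply/eq_seq_msetP; apply: perm_CR_of_sum_ycode IH _ _ _.
- exact: leq_trans (size_nbrs v) VG.
- exact: leq_trans (size_nbrs v') VG'.
- by rewrite -!sum_nbrs.
Qed.

Lemma same_cr_colours_of_sum_ycode k (G G' : graph l) :
  #|vert G| <= n -> #|vert G'| <= n ->
  \sum_(v : vert G) ycode k.+1 v = \sum_(v : vert G') ycode k.+1 v ->
  same_cr_colours k G G'.
Proof.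
move=> VG VG' E; apply: perm_CR_of_sum_ycode (CR_eq_of_round_code VG VG') _ _ _.
- by rewrite -cardE.
- by rewrite -cardE.
- by rewrite !big_enum.
Qed.

End IntegerShadow.

Import GRing.Theory Num.Theory.
Import numFieldNormedType.Exports.
Local Open Scope ring_scope.

Definition layer (R : realType) (p r : nat) (A : 'M[R]_(r, p)) (b : 'cV[R]_r)
  (sigma : R -> R) (x : 'cV[R]_p) : 'cV[R]_r := map_mx sigma (A *m x + b).

Lemma layer_fnn (R : realType) (p r : nat) (A : 'M[R]_(r, p)) (b : 'cV[R]_r)
  (sigma : R -> R) : continuous sigma -> fnn_fun (layer A b sigma).
Proof. exact: FNNLayer. Qed.

Lemma sum_indicator_mulr (R : pzSemiRingType) (T : finType) (t0 : T) (F : T -> R) :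
  \sum_t (t == t0)%:R * F t = F t0.
Proof.
rewrite (bigD1 t0) //= eqxx mul1r big1 ?addr0 // => t /negbTE->.
by rewrite mul0r.
Qed.

Lemma pairing_natr (R : pzSemiRingType) (K a y S : nat) :
  (pairing K a y S)%:R = a%:R ^+ 2 + K%:R ^+ 2 * ((y%:R + S%:R) ^+ 2 + S%:R) :> R.
Proof. by rewrite /pairing natrD natrM !natrX natrD natrX natrD. Qed.

Section Network.
Variables (R : realType) (l n : nat).

Definition lab_weight (j : 'I_l.+1) : R := if (j < l)%N then 2 ^+ j else 0.

Definition lab_read (x : 'cV[R]_l.+1) : R := \sum_j lab_weight j * x j 0.

Let K : R := (lab_bound l)%:R.

(* On input (x, s), layer 1 squares y + S, S + 1, S - 1 and a, where y and S
   are the last coordinates of x and s and a is the label code read off x;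
   layer 2 then produces B ^ exponent x s, using (S + 1)^2 - (S - 1)^2 = 4 S. *)
Definition weights1 : 'M[R]_(4, l.+1 + l.+1) := row_mx
  (\matrix_(i, j) [:: (j == ord_max)%:R; 0; 0; lab_weight j]`_i)
  (\matrix_(i, j) [:: (j == ord_max)%:R; (j == ord_max)%:R; (j == ord_max)%:R; 0]`_i).

Definition bias1 : 'cV[R]_4 := \col_i [:: 0; 1; -1; 0]`_i.

Definition weights2 : 'M[R]_(1, 4) :=
  \row_j (ln (radix n)%:R * [:: K ^+ 2; K ^+ 2 / 4; - (K ^+ 2 / 4); 1]`_j).

Definition comb : 'cV[R]_(l.+1 + l.+1) -> 'cV[R]_l.+1 :=
  layer (delta_mx ord_max 0) 0 id
  \o (layer weights2 0 expR \o layer weights1 bias1 (fun t => t ^+ 2)).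

Lemma comb_fnn : fnn_fun comb.
Proof.
have L1 := layer_fnn weights1 bias1 (@exprn_continuous R 2%N).
have L2 := layer_fnn weights2 0 (@continuous_expR R).
have L3 : fnn_fun (layer (delta_mx ord_max 0 : 'M[R]_(l.+1, 1)) 0 id).
  by apply: layer_fnn => t; exact: cvg_id.
exact: FNNComp (FNNComp L1 L2) L3.
Qed.

Definition exponent (x s : 'cV[R]_l.+1) : R :=
  lab_read x ^+ 2 + K ^+ 2 * ((x ord_max 0 + s ord_max 0) ^+ 2 + s ord_max 0).

Lemma layer1_preactivation x s :
  weights1 *m col_mx x s + bias1 =
  \col_i [:: x ord_max 0 + s ord_max 0; s ord_max 0 + 1; s ord_max 0 - 1; lab_read x]`_i.
Proof.
have zero (y : 'cV[R]_l.+1) : \sum_k 0 * y k 0 = 0 by rewrite big1 // => k _; rewrite mul0r.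
apply/matrixP => i j; rewrite (ord1 j) mul_row_col !mxE.
under eq_bigr do rewrite mxE.
under [X in _ + X + _]eq_bigr do rewrite mxE.
by case: i => [[|[|[|[|//]]]] ?] /=; rewrite ?zero ?sum_indicator_mulr ?add0r ?addr0.
Qed.

Lemma combE x s :
  comb (col_mx x s) = expR (ln (radix n)%:R * exponent x s) *: delta_mx ord_max 0.
Proof.
apply/matrixP => i j; rewrite (ord1 j) /comb /layer /=.
rewrite !mxE big_ord1 !mxE addr0 mulrC; congr (_ * _).
rewrite addr0 layer1_preactivation; congr (expR _).
rewrite !big_ord_recl big_ord0 !mxE /=.
by rewrite /exponent; field.
Qed.

Definition readout : 'cV[R]_l.+1 -> 'cV[R]_1 := layer (delta_mx 0 ord_max) 0 id.

Lemma readout_fnn : fnn_fun readout.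
Proof. by apply: layer_fnn => t; exact: cvg_id. Qed.

Definition cr_gnn : rgnn R l := RGNN (leqnSn l) comb_fnn readout_fnn.

Lemma lab_read_delta (r : R) : lab_read (r *: delta_mx ord_max 0) = 0.
Proof.
rewrite /lab_read big1 // => j _; rewrite !mxE /lab_weight.
case: ltnP => [jl|_]; last by rewrite mul0r.
by rewrite -val_eqE /= (ltn_eqF jl) mulr0 mulr0.
Qed.

Lemma zeta_ycode (G : graph l) k (v : vert G) :
  zeta cr_gnn k v ord_max 0 = (ycode n k v)%:R /\
  lab_read (zeta cr_gnn k v) = (lab_part k v)%:R.
Proof.
elim: k v => [|k IH] v.
  split; first by rewrite /= mxE insubN ?ltnn.
  rewrite /lab_read big_ord_recr /= {2}/lab_weight ltnn mul0r addr0 natr_sum.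
  apply: eq_bigr => j _; rewrite /lab_weight /= ltn_ord mxE.
  by rewrite (valK j) natrM natrX mulrC.
have zetaS : zeta cr_gnn k.+1 v =
    comb (col_mx (zeta cr_gnn k v) (\sum_(w | adj v w) zeta cr_gnn k w)) by [].
have exponent_code : exponent (zeta cr_gnn k v) (\sum_(w | adj v w) zeta cr_gnn k w)
    = (round_code n k v)%:R.
  rewrite /exponent (IH v).1 (IH v).2 summxE.
  under eq_bigr do rewrite (IH _).1.
  by rewrite /round_code pairing_natr -natr_sum.
rewrite zetaS combE exponent_code mulrC expRM_natl lnK ?posrE ?ltr0n // -natrX.
by split; [rewrite !mxE !eqxx mulr1 | rewrite lab_read_delta].
Qed.

Lemma xi_cr_gnn k (G : graph l) :
  xi cr_gnn k G 0 0 = (\sum_(v : vert G) ycode n k v)%:R.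
Proof.
rewrite /xi /= /readout /layer -rowE !mxE addr0 summxE natr_sum.
by apply: eq_bigr => v _; rewrite (zeta_ycode _ _).1.
Qed.

End Network.

Theorem corollary8p6 (R : realType) (l n : nat) :
  (1 <= n)%N ->
  exists N : rgnn R l,
    forall G G' : graph l,
      (#|vert G| <= n)%N -> (#|vert G'| <= n)%N ->
      CRinf_distinguishes G G' -> xi N n G <> xi N n G'.
Proof.
case: n => // m _; exists (cr_gnn R l m.+1) => G G' VG VG' distinguished xiE.
apply: (not_CRinf_distinguishes VG VG' _ distinguished).
apply: (same_cr_colours_of_sum_ycode VG VG').
by apply/eqP; rewrite -(eqr_nat R) -!xi_cr_gnn xiE.
Qed.
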